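(* $\mathcal A/\mathcal A_1\cong\mathbb Z_2$, and for all integers $n\ge1$, $$\mathcal A_{2n-1}/\mathcal A_{2n+1}\cong\mathbb Z_2\times\mathbb Z_2.$$
   Context: Over $\mathbb F_2$, the Appell subgroup $\mathcal A$ of the Riordan group is the abelian group of Riordan arrays $(g,t)$ with $g\in\mathbb F_2[[t]]$, $g(0)=1$, with product $(g_1,t)(g_2,t)=(g_1g_2,t)$. For $n\ge0$, $\mathcal A_n=\{(g,t)\in\mathcal A: g\equiv 1\pmod{t^{n+1}}\}$, i.e. $g=1+\alpha_{n+1}t^{n+1}+\alpha_{n+2}t^{n+2}+\cdots$. $\mathbb Z_2=\mathbb Z/2\mathbb Z$. *)

From mathcomp Require Import all_boot all_algebra.
Set Implicit Arguments. Unset Strict Implicit. Unset Printing Implicit Defensive.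
Import GRing.Theory.
Local Open Scope ring_scope.

Definition series := nat -> 'F_2.

Definition smul (a b : series) : series :=
  fun m => \sum_(i < m.+1) a i * b (m - i)%N.

(* Membership of the Riordan array (g,t) in A_n: g = 1 mod t^(n+1),
   i.e. g 0 = 1 and g i = 0 for 1 <= i <= n.  A = A_0. *)
Definition inA (n : nat) (g : series) : Prop :=
  g 0%N = 1 /\ forall i : nat, (1 <= i <= n)%N -> g i = 0.

(* P / Q is isomorphic to the abelian group Z (Q a subgroup of P):
   there is a group homomorphism f from P onto Z whose fibres are exactly
   the cosets h Q, i.e. f induces an isomorphism P/Q ~= Z. *)
Definition quotient_iso (P Q : series -> Prop) (Z : zmodType) : Prop :=
  exists f : series -> Z,
    [/\ (forall g h, P g -> P h -> f (smul g h) = f g + f h),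
        (forall z : Z, exists g, P g /\ f g = z)
      & (forall g h, P g -> P h ->
           (f g = f h <-> exists k, Q k /\ forall m, g m = smul h k m))].

(* A power series g = 1 + a_{N+1} t^{N+1} + ... in A_N multiplies like a
   vector of coefficients as long as cross terms cannot appear: for g, h in
   A_N the product g h agrees with g + h on the coefficients of t^1 .. t^{2N+1}.
   Hence, for N < M <= 2N+1, reading the coefficients of t^{N+1} .. t^M is a
   homomorphism from A_N onto F_2^{M-N} whose fibres are the cosets of A_M:
   every h with h(0) = 1 is invertible, and h^{-1} g lies in A_M exactly when
   g and h agree up to t^M.  Both claims are the cases (N, M) = (0, 1) and
   (2n-1, 2n+1). *)
From mathcomp Require Import all_boot all_algebra.
From mathcomp Require Import zify.
Set Implicit Arguments.
Unset Strict Implicit.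
Unset Printing Implicit Defensive.

Import GRing.Theory.
Local Open Scope ring_scope.

Lemma inA_succ N k : inA N k -> k N.+1 = 0 -> inA N.+1 k.
Proof.
move=> [k0 kN] kN1; split=> // i /andP[i_gt0]; rewrite leq_eqVlt.
by case/orP=> [/eqP-> // | i_le]; apply: kN; rewrite i_gt0.
Qed.

Lemma smul_coef_inA N g h m : inA N g -> inA N h -> (1 <= m <= N.*2.+1)%N ->
  smul g h m = g m + h m.
Proof.
move=> [g0 gN] [h0 hN]; case: m => [//|m] le_m.
rewrite /smul big_ord_recr big_ord_recl /= subn0 subnn g0 h0 mul1r mulr1.
rewrite big1 ?addr0 1?addrC // => i _; rewrite /bump /=.
have lt_i := ltn_ord i.
case: (leqP i.+1 N) => le_iN; first by rewrite gN ?mul0r //; lia.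
by rewrite hN ?mulr0 //; lia.
Qed.

Lemma smul_coef_inA_low M h k j : inA M k -> (j <= M)%N -> smul h k j = h j.
Proof.
move=> [k0 kM] le_jM; rewrite /smul big_ord_recr /= subnn k0 mulr1.
by rewrite big1 ?add0r // => i _; rewrite kM ?mulr0 //; have := ltn_ord i; lia.
Qed.

Lemma smul_coef_inA_next M h k : inA M k ->
  smul h k M.+1 = h M.+1 + h 0%N * k M.+1.
Proof.
move=> [k0 kM]; rewrite /smul big_ord_recr big_ord_recl /= subnn subn0 k0 mulr1.
rewrite big1 ?addr0 1?addrC // => i _; rewrite /bump /= kM ?mulr0 //.
by have := ltn_ord i; lia.
Qed.

Lemma inA_smul_agree M g h k : h 0%N = 1 -> g 0%N = 1 ->
  (forall m, g m = smul h k m) -> (forall j, (1 <= j <= M)%N -> g j = h j) ->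
  inA M k.
Proof.
move=> h0 g0 g_hk; elim: M => [_ | M IH agree].
  by split=> [|[|i] //]; rewrite -g0 g_hk /smul big_ord1 h0 mul1r.
have kM : inA M k by apply: IH => j /andP[j_gt0 le_jM]; apply: agree; lia.
apply: inA_succ; first exact: kM.
apply: (addrI (h M.+1)).
by rewrite addr0 -{1}(mul1r (k _)) -h0 -smul_coef_inA_next // -g_hk agree ?ltnSn.
Qed.

Section SeriesDivision.

Variables h g : series.

(* The coefficients of g / h from k_m = g_m - sum_(0 < i <= m) h_i k_(m-i);
   the fuel bounds the recursion depth, and any fuel above m gives k_m. *)
Fixpoint sdiv_fuel (fuel m : nat) : 'F_2 :=
  if fuel is fuel'.+1 then
    g m - \sum_(i < m) h i.+1 * sdiv_fuel fuel' (m - i.+1)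
  else 0.

Definition sdiv : series := fun m => sdiv_fuel m.+1 m.

Lemma sdiv_fuel_enough fuel m : (m < fuel)%N -> sdiv_fuel fuel m = sdiv m.
Proof.
elim/ltn_ind: m fuel => m IH [|fuel] // lt_mf; rewrite /sdiv /=.
congr (_ - _); apply: eq_bigr => i _; congr (_ * _).
have lt_im := ltn_ord i; by rewrite !IH //; lia.
Qed.

Lemma smul_sdiv : h 0%N = 1 -> forall m, g m = smul h sdiv m.
Proof.
move=> h0 m; rewrite /smul big_ord_recl h0 mul1r subn0 {1}/sdiv /=.
have -> : \sum_(i < m) h i.+1 * sdiv_fuel m (m - i.+1)
        = \sum_(i < m) h (bump 0 i) * sdiv (m - bump 0 i)%N.
  apply: eq_bigr => i _; rewrite sdiv_fuel_enough //.
  by have := ltn_ord i; lia.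
by rewrite subrK.
Qed.

End SeriesDivision.

Definition one_plus_tail (N : nat) (c : series) : series :=
  fun i => if (i <= N)%N then (i == 0%N)%:R else c i.

Lemma inA_one_plus_tail N c : inA N (one_plus_tail N c).
Proof.
by split=> [|[|i] /andP[_ le_iN]] //; rewrite /one_plus_tail le_iN.
Qed.

Section CoefficientWindow.

Variables (N M : nat) (Z : zmodType) (f : series -> Z).
Hypothesis le_M_2N1 : (M <= N.*2.+1)%N.
Hypothesis f_eq : forall g h,
  f g = f h <-> (forall j, (N < j <= M)%N -> g j = h j).
Hypothesis f_add : forall g h s,
  (forall j, (N < j <= M)%N -> s j = g j + h j) -> f s = f g + f h.
Hypothesis f_surj : forall z, exists g, f g = z.

Lemma quotient_iso_window : quotient_iso (inA N) (inA M) Z.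
Proof.
exists f; split.
- by move=> g h Ag Ah; apply: f_add => j Hj; rewrite (smul_coef_inA Ag Ah) //; lia.
- move=> z; have [c fc] := f_surj z; exists (one_plus_tail N c).
  split; first exact: inA_one_plus_tail.
  by rewrite -fc; apply/f_eq => j Hj; rewrite /one_plus_tail leqNgt (andP Hj).1.
- move=> g h [g0 gN] [h0 hN]; split=> [/f_eq agree | [k [Ak g_hk]]].
    exists (sdiv h g); split; last exact: smul_sdiv.
    apply: (inA_smul_agree h0 g0 (smul_sdiv g h0)) => j Hj.
    by case: (leqP j N) => le_jN; [rewrite gN ?hN ?Hj // | apply: agree]; lia.
  by apply/f_eq => j /andP[_ le_jM]; rewrite g_hk (smul_coef_inA_low _ Ak).
Qed.

End CoefficientWindow.

Theorem corollary6 :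
  quotient_iso (inA 0) (inA 1) 'Z_2 /\
  (forall n : nat, (1 <= n)%N ->
     quotient_iso (inA (2 * n - 1)) (inA (2 * n + 1)) ('Z_2 * 'Z_2)%type).
Proof.
split.
- apply: (@quotient_iso_window 0 1 _ (fun g => g 1%N : 'Z_2)) => //.
  + move=> g h; split=> [E [|[|j]] // | E]; exact: E.
  + by move=> g h s ->.
  + by move=> z; exists (fun _ => z).
- move=> n n_gt0; set j0 := (2 * n)%N.
  apply: (@quotient_iso_window (2 * n - 1) (2 * n + 1) _
            (fun g => (g j0 : 'Z_2, g j0.+1 : 'Z_2))); first lia.
  + move=> g h; split=> [[E0 E1] j Hj | E]; last by rewrite !E //; lia.
    by have [->|->] : j = j0 \/ j = j0.+1 by lia.
  + by move=> g h s E; rewrite !E //; lia.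
  + move=> [a b]; exists (fun i => if i == j0 then a else b).
    by rewrite eqxx (gtn_eqF (ltnSn j0)).
Qed.
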